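(* Let $X$ be a graph on vertex set $V$ with $|V|=n$, possibly with loops (but no multiple edges), with adjacency matrix $A$ and vertex degrees $d_1,\dots,d_n$ (each loop counted once in the degree). Let $T=\operatorname{diag}(t_1,\dots,t_n)$ be a real diagonal matrix such that $T+A$ is positive semidefinite. If $S\subseteq V$ is an independent set of size $s$ containing $s_1$ vertices that carry loops, then \[ \frac{s^2}{n^2}\sum_{i\in V}(t_i+d_i)\;-\;2\frac{s}{n}\sum_{i\in S}(t_i+d_i)\;+\;\sum_{i\in S}t_i\;\ge\;-s_1 . \]
   Context: The adjacency matrix $A$ has $A_{ij}=1$ if $i\ne j$ are adjacent and $0$ otherwise, and $A_{ii}=1$ if vertex $i$ carries a loop and $0$ otherwise. An independent set is a set of vertices no two distinct members of which are adjacent; vertices with loops are allowed in an independent set. *)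

From mathcomp Require Import all_boot all_order all_algebra.
Set Implicit Arguments. Unset Strict Implicit. Unset Printing Implicit Defensive.
Import Order.TTheory GRing.Theory Num.Theory.
Local Open Scope ring_scope.

(* A graph on vertex set 'I_n, possibly with loops, no multiple edges, is a
   symmetric relation e : rel 'I_n; e i i = true means vertex i carries a loop. *)
Definition symmetric_graph n (e : rel 'I_n) : Prop := forall i j, e i j = e j i.

Definition adjmx (R : nzRingType) n (e : rel 'I_n) : 'M[R]_n :=
  \matrix_(i, j) (e i j)%:R.

(* Degree; a loop contributes 1 (i is counted among its own neighbours). *)
Definition deg n (e : rel 'I_n) (i : 'I_n) : nat := #|[set j | e i j]|.

Definition psd (R : numDomainType) n (M : 'M[R]_n) : Prop :=
  forall x : 'cV[R]_n, 0 <= ((x^T *m M *m x) 0 0).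

Definition independent n (e : rel 'I_n) (S : {set 'I_n}) : Prop :=
  forall i j, i \in S -> j \in S -> i != j -> ~~ e i j.

(** Test positive semidefiniteness of [T + A] against [x = 1_S - (s/n) 1].
    Writing [Q(u, v) = u^T (T + A) v], symmetry gives
    [0 <= Q(x, x) = Q(1_S, 1_S) - 2 (s/n) Q(1_S, 1) + (s/n)^2 Q(1, 1)].
    Row sums of [T + A] are [t_i + d_i], which evaluates the last two terms,
    and independence of [S] leaves only the diagonal in [Q(1_S, 1_S)], which
    is therefore [sum_(i in S) t_i + s_1]. *)
From mathcomp Require Import all_boot all_order all_algebra.
From mathcomp Require Import ring lra.
Set Implicit Arguments. Unset Strict Implicit. Unset Printing Implicit Defensive.
Import Order.TTheory GRing.Theory Num.Theory.
Local Open Scope ring_scope.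

Section BilinearForm.
Variables (R : comNzRingType) (n : nat).

Definition bform (M : 'M[R]_n) (x y : 'cV[R]_n) : R := (x^T *m M *m y) 0 0.

Definition indicator (A : {set 'I_n}) : 'cV[R]_n := \col_i (i \in A)%:R.

Lemma bformE M x y : bform M x y = \sum_i \sum_j x i 0 * M i j * y j 0.
Proof.
rewrite /bform mxE exchange_big; apply: eq_bigr => j _.
by rewrite mxE big_distrl; apply: eq_bigr => i _; rewrite mxE.
Qed.

Lemma bformC M x y : M^T = M -> bform M x y = bform M y x.
Proof.
move=> symM; rewrite !bformE exchange_big.
apply: eq_bigr => j _; apply: eq_bigr => i _.
have -> : M j i = M^T i j by rewrite mxE.
by rewrite symM; ring.
Qed.

Lemma bformBl M x y z : bform M (x - y) z = bform M x z - bform M y z.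
Proof. by rewrite /bform linearB /= !mulmxBl !mxE. Qed.

Lemma bformBr M x y z : bform M x (y - z) = bform M x y - bform M x z.
Proof. by rewrite /bform mulmxBr !mxE. Qed.

Lemma bformZl M c x y : bform M (c *: x) y = c * bform M x y.
Proof. by rewrite /bform linearZ /= -!scalemxAl mxE. Qed.

Lemma bformZr M c x y : bform M x (c *: y) = c * bform M x y.
Proof. by rewrite /bform -scalemxAr mxE. Qed.

Lemma bform_subZ M (u v : 'cV[R]_n) c : M^T = M ->
  bform M (u - c *: v) (u - c *: v)
  = bform M u u - 2 * c * bform M u v + c ^+ 2 * bform M v v.
Proof.
move=> symM; rewrite !(bformBl, bformBr, bformZl, bformZr) [bform M v u]bformC //.
ring.
Qed.

Lemma bform_indicator M A B :
  bform M (indicator A) (indicator B) = \sum_(i in A) \sum_(j in B) M i j.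
Proof.
rewrite bformE [RHS]big_mkcond; apply: eq_bigr => i _.
under eq_bigr do rewrite !mxE.
case: (i \in A); last by rewrite big1 // => j _; rewrite !mul0r.
rewrite [RHS]big_mkcond; apply: eq_bigr => j _.
by case: (j \in B); rewrite mul1r ?mulr1 ?mulr0.
Qed.

End BilinearForm.

Arguments indicator {R n} A.

Section GraphMatrix.
Variables (R : nzRingType) (n : nat) (e : rel 'I_n) (t : 'I_n -> R).
Local Notation M := (diag_mx (\row_i t i) + adjmx R e).

Lemma diag_adjmxE i j : M i j = (i == j)%:R * t i + (e i j)%:R.
Proof. by rewrite /adjmx !mxE mulr_natl. Qed.

Lemma sum_row_diag_adjmx i : \sum_j M i j = t i + (deg e i)%:R.
Proof.
under eq_bigr do rewrite diag_adjmxE.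
rewrite big_split /= (bigD1 i) //= eqxx mul1r big1 ?addr0; last first.
  by move=> j /negbTE; rewrite eq_sym => ->; rewrite mul0r.
congr (_ + _); rewrite /deg -sum1_card natr_sum [RHS]big_mkcond /=.
by apply: eq_bigr => j _; rewrite inE; case: (e i j).
Qed.

Lemma tr_diag_adjmx : symmetric_graph e -> M^T = M.
Proof.
move=> sym_e; apply/matrixP => i j.
rewrite mxE !diag_adjmxE sym_e eq_sym.
by case: eqP => [->|_]; rewrite ?mul0r.
Qed.

Lemma sum_indep_diag_adjmx S : independent e S ->
  \sum_(i in S) \sum_(j in S) M i j
  = \sum_(i in S) t i + #|[set i in S | e i i]|%:R.
Proof.
move=> indS.
have sum_row_S i : i \in S -> \sum_(j in S) M i j = t i + (e i i)%:R.
  move=> iS; rewrite (bigD1 i) //= big1 ?addr0.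
    by rewrite diag_adjmxE eqxx mul1r.
  move=> j /andP[jS ji]; rewrite diag_adjmxE eq_sym (negbTE ji) mul0r add0r.
  by rewrite (negbTE (indS i j iS jS _)) // eq_sym.
rewrite (eq_bigr _ sum_row_S) big_split /=; congr (_ + _).
rewrite -sum1_card natr_sum big_mkcond [RHS]big_mkcond /=.
by apply: eq_bigr => i _; rewrite inE; case: (i \in S); case: (e i i).
Qed.

End GraphMatrix.

Theorem lemma2p1 (R : realFieldType) (n : nat) (e : rel 'I_n)
  (t : 'I_n -> R) (S : {set 'I_n}) :
  symmetric_graph e ->
  psd (diag_mx (\row_i t i) + adjmx R e) ->
  independent e S ->
  let s : R := (#|S|)%:R in
  let s1 : R := (#|[set i in S | e i i]|)%:R in
  let N : R := n%:R in
  (s ^+ 2 / N ^+ 2) * (\sum_(i < n) (t i + (deg e i)%:R))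
    - 2 * (s / N) * (\sum_(i in S) (t i + (deg e i)%:R))
    + \sum_(i in S) t i >= - s1.
Proof.
move=> sym_e psdM indS; cbv zeta; set s : R := #|S|%:R; set N : R := n%:R.
set M := diag_mx (\row_i t i) + adjmx R e.
have sum_setT (F : 'I_n -> R) : \sum_(i in [set: 'I_n]) F i = \sum_i F i.
  by apply: eq_bigl => i; rewrite inE.
have sum_row i : \sum_(j in [set: 'I_n]) M i j = t i + (deg e i)%:R.
  by rewrite sum_setT sum_row_diag_adjmx.
have := psdM (indicator S - (s / N) *: indicator setT).
rewrite -/(bform _ _ _) bform_subZ ?tr_diag_adjmx // !bform_indicator.
rewrite sum_indep_diag_adjmx // !(eq_bigr _ (fun i _ => sum_row i)) sum_setT.
rewrite expr_div_n => psd_x; lra.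
Qed.
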